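(* Let $X$ and $Y$ be finite sets, let $I = X \cap Y$, and let $p \in [1/2, 1]$. Let $Z = |X \cap Y_{\mathrm{sub}}|$, where $Y_{\mathrm{sub}} \subseteq Y$ is obtained by including each element of $Y$ independently with probability $p$. Let $Z'' = |I \setminus T_1| + \sum_{y \in T_1} c_y$, where $s_1 \sim \mathrm{Bin}(|I|, 2(1-p))$, $T_1$ is chosen uniformly at random among subsets of $I$ of size $s_1$, and the $c_y \sim \mathrm{Ber}(1/2)$, $y\in T_1$, are independent fair coins. Then $Z$ and $Z''$ are identically distributed. Consequently, for any $\epsilon>0$, $\delta \in [0,1)$, the map $Y \mapsto Z$ (with $X$ and $p$ fixed) is $(\epsilon,\delta)$-differentially private with respect to $Y$ if and only if the map $Y \mapsto Z''$ is.
   Context: $\mathrm{Ber}(r)$ denotes a Bernoulli random variable with success probability $r$, and $\mathrm{Bin}(m,r)$ a binomial random variable. A randomized mechanism $\mathcal M$ taking a finite set $Y$ as input is $(\epsilon,\delta)$-differentially private with respect to $Y$ if for all neighboring inputs $Y \sim Y'$ and every set $W$ of outputs, $\Pr[\mathcal M(Y) \in W] \le e^{\epsilon}\Pr[\mathcal M(Y') \in W] + \delta$. Neighbors are in the bounded sense: $Y'$ is obtained from $Y$ by replacing exactly one element with another element (so $|Y|=|Y'|$). *)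

From mathcomp Require Import all_boot all_order all_algebra.
From mathcomp Require Import reals sequences exp.
From mathcomp Require Import finmap.
Set Implicit Arguments. Unset Strict Implicit. Unset Printing Implicit Defensive.
Import Order.TTheory GRing.Theory Num.Theory.
Local Open Scope ring_scope.
Local Open Scope fset_scope.

Section Defs.
Variables (R : realType) (U : choiceType).

(* Bernoulli product: probability that the p-subsample of Y equals S (S ⊆ Y). *)
Definition subsample_weight (p : R) (Y S : {fset U}) : R :=
  p ^+ #|` S| * (1 - p) ^+ (#|` Y| - #|` S|).

Definition PrZ (X : {fset U}) (p : R) (Y : {fset U}) (W : pred nat) : R :=
  \sum_(S <- fpowerset Y) subsample_weight p Y S * (#|` (X `&` S)| \in W)%:R.

Definition binpmf (n : nat) (q : R) (s : nat) : R :=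
  ('C(n, s))%:R * q ^+ s * (1 - q) ^+ (n - s).

(* Pr[Z'' \in W]: I = X ∩ Y, s1 ~ Bin(|I|, 2(1-p)), T1 uniform among the
   size-s1 subsets of I, independent fair coins c_y (y ∈ T1); the set C ⊆ T1
   is the set of y with c_y = 1, each C having probability (1/2)^|T1|. *)
Definition PrZ2 (X : {fset U}) (p : R) (Y : {fset U}) (W : pred nat) : R :=
  let I := X `&` Y in
  \sum_(s < (#|` I|).+1)
    binpmf #|` I| (2 * (1 - p)) s *
    \sum_(T <- fpowerset I | #|` T| == s)
      ('C(#|` I|, s))%:R^-1 *
      \sum_(C <- fpowerset T)
        (2^-1) ^+ #|` T| * ((#|` (I `\` T)| + #|` C|)%N \in W)%:R.

Definition neighbors (Y Y' : {fset U}) : Prop :=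
  exists a b, a \in Y /\ b \notin Y /\ Y' = b |` (Y `\ a).

Definition DP (M : {fset U} -> pred nat -> R) (eps delta : R) : Prop :=
  forall Y Y', neighbors Y Y' -> forall W : pred nat,
    (M Y W <= expR eps * M Y' W + delta)%R.

End Defs.

From mathcomp Require Import all_boot all_order all_algebra.
From mathcomp Require Import reals sequences exp.
From mathcomp Require Import finmap ring.
Set Implicit Arguments. Unset Strict Implicit. Unset Printing Implicit Defensive.
Import Order.TTheory GRing.Theory Num.Theory.
Local Open Scope fset_scope.
Local Open Scope ring_scope.

(* Both Z and Z'' are sums of independent Bernoulli(p) variables indexed by
   I = X ∩ Y.  For Z'', an element of I lands in T1 with
   probability q = 2(1 - p) (choosing the size binomially and then a uniform
   subset of that size is the same as keeping each element independently with
   probability q); it then contributes a fair coin, and otherwise it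
   contributes 1, so it contributes 1 with probability (1 - q) + q/2 = p.
   Formally, the expectations of any g(Z) and g(Z'') satisfy the same
   recursion when one element is added to Y, so they agree by induction. *)

Lemma big_fpowersetU1 (V : nmodType) (K : choiceType) (a : K) (A : {fset K})
    (F : {fset K} -> V) :
  a \notin A ->
  \sum_(S <- fpowerset (a |` A)) F S =
    \sum_(S <- fpowerset A) F S + \sum_(S <- fpowerset A) F (a |` S).
Proof.
move=> aA; rewrite (big_fsetID _ (fun S : {fset K} => a \notin S)) /=.
have notin_sub S : S `<=` A -> a \notin S.
  by move=> /fsubsetP SA; apply: contra aA; apply: SA.
congr (_ + _).
  by apply: eq_fbigl => S; rewrite !inE /= !fpowersetE -fsubsetD1 fsetU1K.
have -> : [fset S in fpowerset (a |` A) | ~~ ~~ (a \in S)] =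
          [fset a |` S | S in fpowerset A].
  apply/fsetP => S; rewrite !inE /= negbK fpowersetE.
  apply/andP/imfsetP => [[SaA aS]|[T /=]].
    by exists (S `\ a); rewrite ?fsetD1K // fpowersetE fsubDset.
  by rewrite fpowersetE => TA ->; rewrite fset1U1 fsetUS.
rewrite big_imfset //= => S T; rewrite !fpowersetE => /notin_sub aS /notin_sub aT eST.
by rewrite -(fsetU1K aS) -(fsetU1K aT) eST.
Qed.

Lemma fsetIU1 (K : choiceType) (a : K) (X S : {fset K}) :
  X `&` (a |` S) = if a \in X then a |` (X `&` S) else X `&` S.
Proof. by rewrite fsetIUr fsetI1; case: ifP; rewrite ?fset0U. Qed.

Section Resampling.
Variables (R : numFieldType) (K : choiceType).
Implicit Types (g : nat -> R) (T I : {fset K}).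

Definition coin_expect g (d : nat) T : R :=
  \sum_(C <- fpowerset T) 2^-1 ^+ #|` T| * g (d + #|` C|)%N.

(* E[g Z''] when T1 is drawn by keeping each element of I with probability q. *)
Definition resample_expect (q : R) g I : R :=
  \sum_(T <- fpowerset I)
    q ^+ #|` T| * (1 - q) ^+ (#|` I| - #|` T|) * coin_expect g #|` I `\` T| T.

Lemma coin_expectS g d T : coin_expect g d.+1 T = coin_expect (fun k => g k.+1) d T.
Proof. by apply: eq_bigr => C _; rewrite addSn. Qed.

Lemma coin_expectU1 g d a T : a \notin T ->
  coin_expect g d (a |` T) =
    2^-1 * (coin_expect g d T + coin_expect (fun k => g k.+1) d T).
Proof.
move=> aT; rewrite /coin_expect big_fpowersetU1 // mulrDr !mulr_sumr.
congr (_ + _); rewrite big_seq [RHS]big_seq; apply: eq_bigr => C.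
  by rewrite cardfsU1 aT exprS mulrA.
rewrite fpowersetE => /fsubsetP CT.
have aC : a \notin C by apply: contra aT; apply: CT.
by rewrite !cardfsU1 aT aC addnS exprS mulrA.
Qed.

Lemma resample_expect0 q g : resample_expect q g fset0 = g 0%N.
Proof.
rewrite /resample_expect /coin_expect fpowerset0 big_seq_fset1.
by rewrite fpowerset0 big_seq_fset1 fsetD0 cardfs0 !expr0 !mul1r.
Qed.

Lemma resample_expectU1 q g a I : a \notin I ->
  resample_expect q g (a |` I) =
    (1 - q / 2) * resample_expect q (fun k => g k.+1) I + q / 2 * resample_expect q g I.
Proof.
move=> aI; rewrite /resample_expect big_fpowersetU1 // !mulr_sumr -!big_split /=.
rewrite big_seq [RHS]big_seq; apply: eq_bigr => T; rewrite fpowersetE => TI.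
have aT : a \notin T by apply: contra aI; apply: (fsubsetP TI).
have aIT : a \notin I `\` T by rewrite inE (negbTE aI) andbF.
have -> : (a |` I) `\` T = a |` (I `\` T).
  by apply/fsetP => x; rewrite !inE; case: eqP => // ->; rewrite (negbTE aT).
have -> : (a |` I) `\` (a |` T) = I `\` T.
  by apply/fsetP => x; rewrite !inE; case: eqP => // ->; rewrite (negbTE aI) andbF.
rewrite coin_expectU1 // !cardfsU1 aI aT aIT !add1n coin_expectS subSS.
rewrite subSn ?fsubset_leq_card //.
by rewrite !exprS; field.
Qed.

End Resampling.

Section Subsampling.
Variables (R : realType) (U : choiceType) (X : {fset U}) (p : R).
Implicit Types (g : nat -> R) (Y : {fset U}).

Definition subsample_expect g Y : R :=
  \sum_(S <- fpowerset Y) subsample_weight p Y S * g #|` X `&` S|.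

Lemma subsample_expect0 g : subsample_expect g fset0 = g 0%N.
Proof.
rewrite /subsample_expect fpowerset0 big_seq_fset1 /subsample_weight fsetI0.
by rewrite cardfs0 !expr0 !mul1r.
Qed.

Lemma subsample_expectU1 g a Y : a \notin Y ->
  subsample_expect g (a |` Y) =
    if a \in X
    then p * subsample_expect (fun k => g k.+1) Y + (1 - p) * subsample_expect g Y
    else subsample_expect g Y.
Proof.
move=> aY; rewrite /subsample_expect big_fpowersetU1 //.
have a_dropped : \sum_(S <- fpowerset Y) subsample_weight p (a |` Y) S * g #|` X `&` S| =
                 (1 - p) * subsample_expect g Y.
  rewrite mulr_sumr big_seq [RHS]big_seq; apply: eq_bigr => S.
  rewrite fpowersetE => /fsubset_leq_card SY.
  by rewrite /subsample_weight cardfsU1 aY add1n subSn // exprS; ring.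
have a_kept : \sum_(S <- fpowerset Y)
                 subsample_weight p (a |` Y) (a |` S) * g #|` X `&` (a |` S)| =
              p * subsample_expect (fun k => g ((a \in X) + k)%N) Y.
  rewrite mulr_sumr big_seq [RHS]big_seq; apply: eq_bigr => S.
  rewrite fpowersetE => /fsubsetP SY.
  have aS : a \notin S by apply: contra aY; apply: SY.
  rewrite /subsample_weight fsetIU1 !cardfsU1 aY aS add1n subSS exprS.
  by case: (a \in X); rewrite ?cardfsU1 ?inE ?(negbTE aS) ?andbF //=; ring.
rewrite a_dropped a_kept; case: (a \in X); first by rewrite addrC.
by rewrite -mulrDl subrK mul1r.
Qed.

Lemma subsample_expect_resample g Y :
  subsample_expect g Y = resample_expect (2 * (1 - p)) g (X `&` Y).
Proof.
have half_q : 2 * (1 - p) / 2 = 1 - p by rewrite mulrC mulKf ?pnatr_eq0.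
elim/fset1U_rect: Y g => [|a Y aY IH] g.
  by rewrite subsample_expect0 fsetI0 resample_expect0.
rewrite subsample_expectU1 // fsetIU1; case: ifP => // aX.
rewrite resample_expectU1 ?inE ?(negbTE aY) ?andbF // half_q !IH.
by rewrite subKr.
Qed.

End Subsampling.

Lemma sum_binpmf_uniform_subset (R : realType) (K : choiceType) (q : R)
    (I : {fset K}) (F : {fset K} -> R) :
  \sum_(s < (#|` I|).+1) binpmf #|` I| q s *
      \sum_(T <- fpowerset I | #|` T| == s) ('C(#|` I|, s))%:R^-1 * F T =
    \sum_(T <- fpowerset I) q ^+ #|` T| * (1 - q) ^+ (#|` I| - #|` T|) * F T.
Proof.
set n := #|` I|; set h := fun T : {fset K} => q ^+ #|` T| * (1 - q) ^+ (n - #|` T|) * F T.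
transitivity (\sum_(s < n.+1) \sum_(T <- fpowerset I) (if #|` T| == s then h T else 0)).
  apply: eq_bigr => s _; rewrite -big_mkcond mulr_sumr /=.
  apply: eq_bigr => T /eqP Ts; rewrite /h /binpmf Ts.
  have Cn : ('C(n, s))%:R != 0 :> R by rewrite pnatr_eq0 -lt0n bin_gt0 -ltnS.
  by field.
rewrite exchange_big /=; apply: eq_big_seq => T; rewrite fpowersetE => TI.
have Tn : (#|` T| < n.+1)%N by rewrite ltnS fsubset_leq_card.
rewrite (bigD1 (Ordinal Tn)) //= eqxx big1 ?addr0 // => s /eqP sT.
by case: eqP => // Ts; case: sT; apply: val_inj.
Qed.

Lemma PrZ2_resample (R : realType) (U : choiceType) (X Y : {fset U}) (p : R)
    (W : pred nat) :
  PrZ2 X p Y W = resample_expect (2 * (1 - p)) (fun k => (k \in W)%:R) (X `&` Y).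
Proof. exact: sum_binpmf_uniform_subset. Qed.

Theorem theorem1 (R : realType) (U : choiceType) (X : {fset U}) (p : R) :
  2^-1 <= p <= 1 ->
  (forall (Y : {fset U}) (W : pred nat), PrZ X p Y W = PrZ2 X p Y W) /\
  (forall eps delta : R, 0 < eps -> 0 <= delta < 1 ->
     (DP (PrZ X p) eps delta <-> DP (PrZ2 X p) eps delta)).
Proof.
(* The identity is polynomial in p; the bound on p only makes 2 (1 - p) a probability. *)
move=> _.
have PrZ_PrZ2 Y W : PrZ X p Y W = PrZ2 X p Y W.
  by rewrite PrZ2_resample -subsample_expect_resample.
split=> // eps delta _ _; split=> DP_M Y Y' YY' W.
  by rewrite -!PrZ_PrZ2; apply: DP_M.
by rewrite !PrZ_PrZ2; apply: DP_M.
Qed.
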